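(* A rhombic satin of odd order belongs to species $28_o$, and a rhombic satin of even order belongs to species $28_e$.
   Context: A prefabric consists of two perpendicular layers of unit-width strands, warps (vertical) and wefts (horizontal). The plane is divided into unit square cells. Each cell is dark if the warp is on top (seen from the front) and pale otherwise. A symmetry is an isometry of the plane, possibly combined with the side reversal $\tau$, preserving the prefabric. $G_1$ denotes the planar part of the symmetry group, and $H_1$ its side-preserving subgroup. Let $\delta$ be the length of a cell diagonal and $\beta=\delta/2$. The $(n,s)$ satin, with $\gcd(n,s)=1$, is the design of period $n$ in which row $i$ has its single dark cell in column $is \bmod n$. It is isonemal iff $s^2\equiv\pm1\pmod n$ and square iff $s^2\equiv-1\pmod n$. A non-square isonemal satin is rectangular if $n$ is even and $s^2\equiv 1\pmod{2n}$. Otherwise it is called rhombic. A prefabric belongs to species 28 if: - $G_1$ is of crystallographic type $cmm$, with axes at $45^\circ$ to the strands; - the glide-reflections whose axes lie between the mirrors are side-reversing; - all half-turns are side-preserving, so that $H_1$ is of type $p2$ with the rhombic $G_1$ lattice unit; - some half-turn centres lie at cell centres. The supplementary half-turn centres are those at intersections of glide-reflection axes. In each rhombic lattice unit they are the four corners of a central rectangle, which is bounded by glide-reflection axes. - Species $28_e$: the supplementary half-turn centres lie at cell corners, and the central rectangle measures $a\delta$ by $b\delta$ with $a$ odd, $b$ even, and $\gcd(a,b)=1$. - Species $28_o$: the supplementary half-turn centres lie on cell edges but not at cell corners, and the central rectangle measures $a\beta$ by $b\beta$ with $a,b$ odd and $\gcd(a,b)=1$. *)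

From HB Require Import structures.
From mathcomp Require Import all_boot all_order all_algebra.
Set Implicit Arguments. Unset Strict Implicit. Unset Printing Implicit Defensive.
Import Order.TTheory GRing.Theory Num.Theory.
Local Open Scope ring_scope.

(* Cells are indexed by (x, y) : int * int (x = column, y = row); the  *)
(* centre of cell (x, y) is the point (x, y) of the plane, measured in *)
(* units of the strand width.  Points of the plane that matter here    *)
(* (half-turn centres, points on axes) have half-integer coordinates;  *)
(* we represent a point p by its DOUBLED coordinates P = 2p : int*int. *)

Definition cell_centre (P : int * int) : bool :=
  ~~ odd (absz P.1) && ~~ odd (absz P.2).
Definition cell_corner (P : int * int) : bool :=
  odd (absz P.1) && odd (absz P.2).
Definition on_cell_edge (P : int * int) : bool :=
  odd (absz P.1) || odd (absz P.2).

(* A prefabric: dark x y = true iff cell (x, y) is dark (warp on top). *)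
Definition prefabric := int -> int -> bool.

(* Isometries of the plane preserving the strand structure (the square *)
(* grid of cells).  In cell-centre coordinates these are exactly the   *)
(* maps p |-> A p + t with A one of the 8 signed permutation matrices  *)
(* and t in Z^2:  (x,y) |-> (sx u + t1, sy v + t2) where (u,v) = (y,x) *)
(* if gsw (warps and wefts interchanged) and (u,v) = (x,y) otherwise,  *)
(* and the sign flags gsx, gsy mean negation.                          *)
Record gisom := GIsom { gsw : bool; gsx : bool; gsy : bool; gt1 : int; gt2 : int }.

Definition sgn (b : bool) (u : int) : int := if b then - u else u.

Definition gapp (g : gisom) (c : int * int) : int * int :=
  let uv := if gsw g then (c.2, c.1) else c in
  (sgn (gsx g) uv.1 + gt1 g, sgn (gsy g) uv.2 + gt2 g).

(* The symmetry (g, tau^e) preserves the prefabric D.  An isometry     *)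
(* interchanging warps and wefts sends the strand on top at a cell to  *)
(* a strand of the other kind, so it complements the colour; so does   *)
(* the side reversal tau.                                              *)
Definition is_sym (D : prefabric) (g : gisom) (e : bool) : Prop :=
  forall x y : int,
    D (gapp g (x, y)).1 (gapp g (x, y)).2 = (D x y (+) gsw g) (+) e.

Definition in_G1 D g := exists e, is_sym D g e.
(* g combined (or not) with tau: side-preserving iff in H_1. *)
Definition side_preserving D g := is_sym D g false.
Definition side_reversing D g := is_sym D g true.

Definition is_transl (g : gisom) := ~~ gsw g && ~~ gsx g && ~~ gsy g.
Definition is_halfturn (g : gisom) := ~~ gsw g && gsx g && gsy g.
(* reflections/glide-reflections with axes parallel to (1,1) *)
Definition is_diagM (g : gisom) := gsw g && ~~ gsx g && ~~ gsy g.
(* reflections/glide-reflections with axes parallel to (1,-1) *)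
Definition is_diagN (g : gisom) := gsw g && gsx g && gsy g.

Definition transl (t : int * int) := GIsom false false false t.1 t.2.
Definition transl_vec D (t : int * int) := in_G1 D (transl t).

(* Half-turn p |-> -p + t has centre t/2, i.e. doubled centre t. *)
Definition ht_centre (g : gisom) : int * int := (gt1 g, gt2 g).

(* For is_diagM g, g(P) = (P2 + 2 t1, P1 + 2 t2) in doubled coordinates:
   reflection in the axis {P | P1 - P2 = t1 - t2} followed by the
   translation (t1 + t2)/2 * (1,1) (cell units) along the axis.
   For is_diagN g, g is the reflection in {P | P1 + P2 = t1 + t2}
   followed by the translation (t1 - t2)/2 * (1,-1) along the axis. *)
Definition axisM (g : gisom) : int := gt1 g - gt2 g.
Definition glideM (g : gisom) : int := gt1 g + gt2 g.
Definition axisN (g : gisom) : int := gt1 g + gt2 g.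
Definition glideN (g : gisom) : int := gt1 g - gt2 g.

Definition mirror_axis_M D (k : int) :=
  exists g, [/\ in_G1 D g, is_diagM g, glideM g = 0 & axisM g = k].
Definition mirror_axis_N D (k : int) :=
  exists g, [/\ in_G1 D g, is_diagN g, glideN g = 0 & axisN g = k].

Definition between_glide_M D g :=
  [/\ in_G1 D g, is_diagM g, glideM g != 0 & ~ mirror_axis_M D (axisM g)].
Definition between_glide_N D g :=
  [/\ in_G1 D g, is_diagN g, glideN g != 0 & ~ mirror_axis_N D (axisN g)].

Definition glide_axis_M D (k : int) := exists g, between_glide_M D g /\ axisM g = k.
Definition glide_axis_N D (k : int) := exists g, between_glide_N D g /\ axisN g = k.

(* G_1 is of crystallographic type cmm, with axes at 45 degrees to the
   strands: point group {I, -I, M, -M} (M the reflection in a diagonal),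
   mirrors in both diagonal directions, a two-dimensional translation
   lattice L which is centred (rhombic) with respect to the mirror
   directions, i.e. L <> (L cap R(1,1)) + (L cap R(1,-1)).  Among the
   plane groups with point group 2mm this singles out cmm. *)
Definition cmm_diag (D : prefabric) : Prop :=
  [/\ forall g, in_G1 D g ->
        [|| is_transl g, is_halfturn g, is_diagM g | is_diagN g],
      exists g, in_G1 D g /\ is_halfturn g,
      (exists k, mirror_axis_M D k) /\ (exists k, mirror_axis_N D k),
      exists t u, [/\ transl_vec D t, transl_vec D u & t.1 * u.2 - t.2 * u.1 != 0]
    & exists t, transl_vec D t /\
        ~ (exists a b : int, [/\ t = (a + b, a - b), transl_vec D (a, a)
                                & transl_vec D (b, - b)])].

Definition H1_p2_same_lattice (D : prefabric) : Prop :=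
  [/\ forall g, side_preserving D g -> is_transl g || is_halfturn g,
      exists g, side_preserving D g /\ is_halfturn g
    & forall t, transl_vec D t -> side_preserving D (transl t)].

Definition species28 (D : prefabric) : Prop :=
  [/\ cmm_diag D,
      forall g, between_glide_M D g \/ between_glide_N D g -> side_reversing D g,
      forall g, in_G1 D g -> is_halfturn g -> side_preserving D g,
      H1_p2_same_lattice D
    & exists g, [/\ in_G1 D g, is_halfturn g & cell_centre (ht_centre g)]].

Definition supp_centre (D : prefabric) (P : int * int) : Prop :=
  [/\ exists g, [/\ in_G1 D g, is_halfturn g & ht_centre g = P],
      glide_axis_M D (P.1 - P.2)
    & glide_axis_N D (P.1 + P.2)].

Definition spacing (K : int -> Prop) (d : int) : Prop :=
  [/\ 0 < d, exists k, K k
    & forall k, K k -> K (k + d) /\ (forall k', K k' -> ~ (k < k' < k + d))].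

(* The central rectangle (bounded by consecutive glide-reflection axes,
   with corners at supplementary half-turn centres) has sides of lengths
   u * (beta/2) and v * (beta/2), where beta = delta/2 is half a cell
   diagonal: the perpendicular distance between the lines
   {P1 -+ P2 = k} and {P1 -+ P2 = k'} (doubled coordinates) is
   |k - k'| * beta / 2.  Side of length u*(beta/2) is between consecutive
   glide axes parallel to (1,1); the other between those parallel to (1,-1). *)
Definition central_rectangle (D : prefabric) (u v : int) : Prop :=
  spacing (glide_axis_M D) u /\ spacing (glide_axis_N D) v.

(* Species 28_e: supplementary centres at cell corners, rectangle
   a*delta by b*delta (delta = 4 * (beta/2)), a odd, b even, coprime. *)
Definition species28e (D : prefabric) : Prop :=
  [/\ species28 D,
      exists P, supp_centre D P,
      forall P, supp_centre D P -> cell_corner P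
    & exists a b : nat, [/\ odd a, ~~ odd b, coprime a b &
        central_rectangle D (4 * a%:Z) (4 * b%:Z)
        \/ central_rectangle D (4 * b%:Z) (4 * a%:Z)]].

(* Species 28_o: supplementary centres on cell edges but not at corners,
   rectangle a*beta by b*beta (beta = 2 * (beta/2)), a, b odd, coprime. *)
Definition species28o (D : prefabric) : Prop :=
  [/\ species28 D,
      exists P, supp_centre D P,
      forall P, supp_centre D P -> on_cell_edge P && ~~ cell_corner P
    & exists a b : nat, [/\ odd a, odd b, coprime a b &
        central_rectangle D (2 * a%:Z) (2 * b%:Z)
        \/ central_rectangle D (2 * b%:Z) (2 * a%:Z)]].

Definition satin (n s : nat) : prefabric :=
  fun x y => (n%:Z %| x - y * s%:Z)%Z.

Definition isonemal_satin (n s : nat) : bool :=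
  (s ^ 2 == 1 %[mod n])%N || (n %| (s ^ 2).+1)%N.
Definition square_satin (n s : nat) : bool := (n %| (s ^ 2).+1)%N.
Definition rectangular_satin (n s : nat) : bool :=
  [&& isonemal_satin n s, ~~ square_satin n s, ~~ odd n
    & (s ^ 2 == 1 %[mod 2 * n])%N].
Definition rhombic_satin (n s : nat) : bool :=
  [&& isonemal_satin n s, ~~ square_satin n s & ~~ rectangular_satin n s].

From Pilot Require Import Defs.
From HB Require Import structures.
From mathcomp Require Import all_boot all_order all_algebra.
From mathcomp Require Import ring zify.
Set Implicit Arguments. Unset Strict Implicit. Unset Printing Implicit Defensive.
Import Order.TTheory GRing.Theory Num.Theory.
Local Open Scope ring_scope.

(* The dark cells of the (n, s) satin form the lattice
   L = {(x, y) | n divides x - y s}.  For a rhombic satin (n > 2, n and s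
   coprime, n | s^2 - 1, and 2n not dividing s^2 - 1 when n is even) we first
   determine all symmetries: (g, tau^e) preserves the satin iff g maps L onto
   itself -- its translation part lies in L and its linear part is +-I or the
   +-swap -- and e records whether g exchanges warps and wefts
   (is_sym_satin); species 28 follows directly (species28_satin).  The
   diagonal axes are governed by gM = gcd(n, s - 1) and gN = gcd(n, s + 1),
   which satisfy n = gM gN (gcd_pair_product): mirrors P1 - P2 = k (resp.
   P1 + P2 = k) are those with 2 gM | k (resp. 2 gN | k), and the glide axes
   between them those with k an odd multiple of gM (resp. gN), so consecutive
   glide axes are 2 gM (resp. 2 gN) apart (spacing_odd_multiple).  A parity
   analysis of gM, gN and of the supplementary centres then yields 28_o for
   odd n and 28_e for even n. *)

Lemma dvd2zM (x y : int) : (2 %| x * y)%Z = (2 %| x)%Z || (2 %| y)%Z.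
Proof. by rewrite !dvdzE abszM Euclid_dvdM. Qed.

Lemma dvdz_gcd_comb (n d k : int) :
  (gcdz n d %| k)%Z <-> exists q y, k = q * n + y * d.
Proof.
split=> [/dvdzP [m ->] | [q [y ->]]].
  have [u [v uv]] := Bezoutz n d.
  by exists (m * u), (m * v); rewrite -uv; ring.
by rewrite rpredD // dvdz_mull // ?dvdz_gcdl ?dvdz_gcdr.
Qed.

(* If n = g * gcd(n, c), then n divides j * c exactly when g divides j:
   by Bezout, j * gcd(n, c) is a combination of j * n and j * c. *)
Lemma dvdz_mul_cofactor (n c g j : int) :
  n != 0 -> n = g * gcdz n c -> (n %| j * c)%Z = (g %| j)%Z.
Proof.
move=> n0 ngh; have h0 : gcdz n c != 0 by rewrite gcdz_eq0 negb_and n0.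
apply/idP/idP => [njc | /dvdzP [q ->]].
  have [u [v uv]] := Bezoutz n c.
  have : (n %| j * gcdz n c)%Z.
    rewrite -uv mulrDr rpredD // mulrCA dvdz_mull //.
    exact: dvdz_mull.
  by rewrite -(@dvdz_mul2r _ g j h0) -ngh.
have /dvdzP [r ->] := dvdz_gcdr n c.
by apply/dvdzP; exists (q * r); rewrite [in RHS]ngh; ring.
Qed.

(* Two partial gcds gcd(n, a) and gcd(n, a + 2) have a common divisor
   dividing gcd(a, a + 2), hence 2. *)
Lemma gcd_gcd_pair_dvd2 (n a : nat) : (gcdn (gcdn n a) (gcdn n (a + 2)) %| 2)%N.
Proof.
apply: (@dvdn_trans (gcdn a (a + 2))); last by rewrite addnC gcdnDr dvdn_gcdr.
by rewrite dvdn_gcd (dvdn_trans (dvdn_gcdl _ _)) ?dvdn_gcdr //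
  (dvdn_trans (dvdn_gcdr _ _)) ?dvdn_gcdr.
Qed.

(* For n dividing a * (a + 2), the two partial gcds gcd(n, a) and
   gcd(n, a + 2) multiply to a divisor of 2n (their lcm divides n, their gcd
   divides 2) and a multiple of n; the product 2n is excluded when 2n does
   not divide a * (a + 2) for even n (for odd n the product is odd). *)
Lemma gcd_pair_product (n a : nat) : (0 < n)%N -> (n %| a * (a + 2))%N ->
  (~~ odd n -> ~~ (n.*2 %| a * (a + 2))%N) -> (gcdn n a * gcdn n (a + 2) = n)%N.
Proof.
move=> n0 ndvd nrect; set g1 := gcdn n a; set g2 := gcdn n (a + 2).
have g12_dvd : (g1 * g2 %| a * (a + 2))%N by rewrite dvdn_mul ?dvdn_gcdr.
have n_dvd : (n %| g1 * g2)%N.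
  rewrite /g1 /g2 muln_gcdl !muln_gcdr !dvdn_gcd ndvd andbT dvdn_mull //.
  by rewrite dvdn_mulr // dvdn_mull.
have dvd_2n : (g1 * g2 %| n.*2)%N.
  rewrite -muln_lcm_gcd -muln2 dvdn_mul ?gcd_gcd_pair_dvd2 //.
  by rewrite dvdn_lcm !dvdn_gcdl.
have [k gk] := dvdnP n_dvd; have k_dvd : (k %| 2)%N.
  by move: dvd_2n; rewrite gk -mul2n dvdn_pmul2r.
case: k gk k_dvd => [|[|[|k]]] // gk _; first by rewrite gk mul1n.
have n_even : ~~ odd n.
  have : (2 %| g1 * g2)%N by rewrite gk dvdn_mulr.
  rewrite Euclid_dvdM // -dvdn2 => /orP[] /dvdn_trans; apply; exact: dvdn_gcdl.
by move: (nrect n_even); rewrite -mul2n -gk g12_dvd.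
Qed.

Definition odd_multiple (g k : int) : bool := (g %| k)%Z && ~~ (2 * g %| k)%Z.

Lemma odd_multipleP (g k : int) : g != 0 ->
  reflect (exists2 m, k = m * g & ~~ (2 %| m)%Z) (odd_multiple g k).
Proof.
move=> g0; apply: (iffP andP) => [[/dvdzP [m ->]] | [m -> m_odd]].
  by rewrite dvdz_mul2r // => m_odd; exists m.
by rewrite dvdz_mull ?dvdzz // dvdz_mul2r.
Qed.

Lemma spacing_odd_multiple (K : int -> Prop) (g : int) :
  0 < g -> (forall k, K k <-> odd_multiple g k) -> spacing K (2 * g).
Proof.
move=> g_gt0 KE; have g0 : g != 0 by rewrite gt_eqF.
split; first by rewrite mulr_gt0.
  by exists g; apply/KE/odd_multipleP => //; exists 1; rewrite ?mul1r.
move=> k /KE /(odd_multipleP _ g0) [m -> m_odd]; split.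
  by apply/KE/odd_multipleP => //; exists (m + 2); [ring | lia].
move=> k' /KE /(odd_multipleP _ g0) [m' -> m'_odd].
by rewrite -mulrDl !ltr_pM2r //; lia.
Qed.

Definition glin (g : gisom) (c : int * int) : int * int :=
  let uv := if gsw g then (c.2, c.1) else c in (sgn (gsx g) uv.1, sgn (gsy g) uv.2).

Lemma gappE (g : gisom) (c : int * int) :
  gapp g c = ((glin g c).1 + gt1 g, (glin g c).2 + gt2 g).
Proof. by []. Qed.

Lemma gapp00 (g : gisom) : gapp g (0, 0) = (gt1 g, gt2 g).
Proof. by case: g => [[] [] [] t1 t2]; rewrite /gapp /sgn /= ?oppr0 !add0r. Qed.

Section SatinLattice.

(* Throughout, n > 2, n and s are coprime
   and n divides s^2 - 1 (the satin is isonemal but not square); for even n,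
   2n does not divide s^2 - 1 (the satin is not rectangular). *)
Variables n s : nat.
Hypothesis n_gt2 : (2 < n)%N.
Hypothesis n_coprime_s : coprime n s.
Hypothesis n_dvd_sqr : (n%:Z %| s%:Z * s%:Z - 1)%Z.
Hypothesis not_rect : ~~ odd n -> ~~ (2 * n%:Z %| s%:Z * s%:Z - 1)%Z.

Local Notation D := (satin n s).
Local Notation lat c := (D c.1 c.2).

Lemma satin_sub (x y x' y' : int) : D x y -> D x' y' -> D (x - x') (y - y').
Proof.
move=> h h'; rewrite /satin.
rewrite (_ : x - x' - (y - y') * s%:Z = (x - y * s%:Z) - (x' - y' * s%:Z)).
  exact: rpredB.
by ring.
Qed.

Lemma satin_add (x y t1 t2 : int) : D t1 t2 -> D (x + t1) (y + t2) = D x y.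
Proof.
move=> t_in; rewrite /satin.
rewrite (_ : x + t1 - (y + t2) * s%:Z = (x - y * s%:Z) + (t1 - t2 * s%:Z)).
  exact: rpredDr.
by ring.
Qed.

Lemma satin_opp (x y : int) : D (- x) (- y) = D x y.
Proof.
rewrite /satin (_ : - x - - y * s%:Z = - (x - y * s%:Z)); first exact: rpredN.
by ring.
Qed.

(* Since s^2 = 1 mod n, L is symmetric in the two coordinates. *)
Lemma satin_swap (x y : int) : D y x = D x y.
Proof.
suff imp u v : D u v -> D v u by apply/idP/idP; apply: imp.
move=> h; rewrite /satin.
rewrite (_ : v - u * s%:Z = - s%:Z * (u - v * s%:Z) - v * (s%:Z * s%:Z - 1)).
  by rewrite rpredB // dvdz_mull.
by ring.
Qed.

Lemma satin00 : D 0 0.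
Proof. by rewrite /satin mul0r subr0 dvdz0. Qed.

Lemma satin_n_0 : D n%:Z 0.
Proof. by rewrite /satin mul0r subr0 dvdzz. Qed.

Lemma satin_s_1 : D s%:Z 1.
Proof. by rewrite /satin mul1r subrr dvdz0. Qed.

Lemma satin_1_0 : ~~ D 1 0.
Proof.
by rewrite /satin mul0r subr0 dvdz1 /=; apply: contraTN n_gt2 => /eqP ->.
Qed.

Lemma satin_2_0 : ~~ D 2 0.
Proof.
rewrite /satin mul0r subr0 dvdzE /=; apply: contraTN n_gt2 => /dvdn_leq.
by rewrite -leqNgt; apply.
Qed.

Lemma satin_s_m1 : ~~ D s%:Z (-1).
Proof.
rewrite /satin mulN1r opprK -mulr2n -mulr_natl dvdzE abszM /=.
by rewrite Gauss_dvdl // -?dvdzE; apply: satin_2_0.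
Qed.

Lemma satin_glin (g : gisom) (c : int * int) :
  gsx g = gsy g -> lat (glin g c) = lat c.
Proof.
by case: g => [[] [] [] t1 t2] //= _; rewrite ?satin_opp ?(satin_swap c.1).
Qed.

Lemma satin_glin_1_0 (g : gisom) : ~~ lat (glin g (1, 0)).
Proof.
have h1 := satin_1_0.
have h2 : ~~ D (-1) 0 by rewrite -satin_opp opprK oppr0.
have h3 : ~~ D 0 1 by rewrite satin_swap.
have h4 : ~~ D 0 (-1) by rewrite satin_swap.
by case: g => [[] [] [] t1 t2]; rewrite /glin /sgn /= ?oppr0.
Qed.

(* A signed permutation with gsx <> gsy maps (s, 1), which lies in L, to
   +-(s, -1) or +-(1, -s), none of which lies in L. *)
Lemma satin_glin_s_1 (g : gisom) : gsx g != gsy g -> ~~ lat (glin g (s%:Z, 1)).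
Proof.
have h1 := satin_s_m1.
have h2 : ~~ D (- s%:Z) 1 by rewrite -satin_opp !opprK.
have h3 : ~~ D 1 (- s%:Z) by rewrite satin_swap.
have h4 : ~~ D (-1) s%:Z by rewrite satin_swap.
by case: g => [[] [] [] t1 t2] //= _; rewrite /glin /sgn /=.
Qed.

Lemma satin_gapp_sub (g : gisom) (c c' : int * int) :
  lat (gapp g c) -> lat (gapp g c') -> lat (glin g (c.1 - c'.1, c.2 - c'.2)).
Proof.
move=> /satin_sub /[apply].
suff -> : glin g (c.1 - c'.1, c.2 - c'.2) =
  ((gapp g c).1 - (gapp g c').1, (gapp g c).2 - (gapp g c').2) by [].
by case: g => [[] [] [] t1 t2]; rewrite /gapp /glin /sgn /=; congr pair; ring.
Qed.

Lemma is_sym_satin (g : gisom) (e : bool) :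
  Defs.is_sym D g e <-> [/\ e = gsw g, D (gt1 g) (gt2 g) & gsx g = gsy g].
Proof.
split=> [sym | [-> t_in sxy] x y]; last first.
  by rewrite gappE satin_add // satin_glin // addbK.
have symc c : lat (gapp g c) = lat c (+) (gsw g (+) e).
  by case: c => x y; rewrite sym addbA.
have sw_e : gsw g (+) e = false.
  apply: contraNF (satin_glin_1_0 g) => c_true.
  have := @satin_gapp_sub g (2, 0) (1, 0).
  rewrite !symc c_true !addbT satin_1_0 satin_2_0 /= subrr.
  by rewrite (_ : 2 - 1 = 1) //; apply.
have L_img c : lat c -> lat (gapp g c) by rewrite symc sw_e addbF.
have t_in : D (gt1 g) (gt2 g) by have := L_img (0, 0) satin00; rewrite gapp00.
split=> //; first by move: sw_e; case: (gsw g); case: (e).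
apply/eqP; apply: (contraTT (@satin_glin_s_1 g)).
have := satin_gapp_sub (L_img (s%:Z, 1) _) (L_img (0, 0) satin00).
by rewrite /= !subr0; apply; apply: satin_s_1.
Qed.

Lemma in_G1_satin (g : gisom) :
  in_G1 D g <-> D (gt1 g) (gt2 g) /\ gsx g = gsy g.
Proof.
split=> [[e /is_sym_satin [] //] | [t_in sxy]].
by exists (gsw g); apply/is_sym_satin.
Qed.

(* The lattice of translations of G_1 is L itself; it is centred with
   respect to the diagonals: for odd n, (n, 0) is not of the form
   (a + b, a - b) with (a, a), (b, -b) in L (parity), and for even n
   neither is (s, 1), since that would make 2n divide s^2 - 1. *)
Lemma satin_centred :
  exists t, transl_vec D t /\
    ~ (exists a b : int, [/\ t = (a + b, a - b), transl_vec D (a, a)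
                            & transl_vec D (b, - b)]).
Proof.
have [n_odd | n_even] := boolP (odd n).
  exists (n%:Z, 0); split; first by apply/in_G1_satin; rewrite /= satin_n_0.
  by case=> a [b [[na ab] _ _]]; move: n_odd; lia.
exists (s%:Z, 1); split; first by apply/in_G1_satin; rewrite /= satin_s_1.
case=> a [b [[sa ab] /in_G1_satin [/= aa _] _]].
have s_eq : s%:Z = 2 * a - 1 by lia.
case/negP: (not_rect n_even).
rewrite (_ : s%:Z * s%:Z - 1 = 2 * - (a - a * s%:Z)).
  by rewrite dvdz_mul2l // rpredN.
by rewrite s_eq; ring.
Qed.

Lemma species28_satin : species28 D.
Proof.
have G1 := in_G1_satin; have sym := is_sym_satin.
have ht0 : in_G1 D (GIsom false true true 0 0) by apply/G1; rewrite /= satin00.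
split.
- split.
  + by case=> [[] [] [] t1 t2] /G1 [].
  + by exists (GIsom false true true 0 0).
  + split; [exists 0, (GIsom true false false 0 0)
           | exists 0, (GIsom true true true 0 0)];
      by split => //; apply/G1; rewrite /= satin00.
  + exists (n%:Z, 0), (s%:Z, 1); split;
      try by apply/G1; rewrite /= ?satin_n_0 ?satin_s_1.
    by rewrite /= mulr1 mul0r subr0 eqz_nat -lt0n ltnW // ltnW.
  + exact: satin_centred.
- move=> g [] [/G1 [t_in sxy] diag _ _]; apply/sym; split => //;
    by move: diag; rewrite /is_diagM /is_diagN; case: (gsw g).
- move=> g /G1 [t_in sxy] ht; apply/sym; split => //.
  by move: ht; rewrite /is_halfturn; case: (gsw g).
- split.
  + by case=> [[] [] [] t1 t2] /sym [].
  + by exists (GIsom false true true 0 0); split => //; apply/sym; rewrite /= satin00.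
  + by move=> t /G1 [t_in _]; apply/sym.
- by exists (GIsom false true true 0 0).
Qed.

Lemma s_gt0 : (0 < s)%N.
Proof.
rewrite lt0n; apply: contraTneq n_coprime_s => ->.
by rewrite /coprime gcdn0; apply: contraTneq n_gt2 => ->.
Qed.

(* The partial gcds gM = gcd(n, s - 1) and gN = gcd(n, s + 1); they govern
   the axes parallel to (1, 1) and to (1, -1) respectively. *)
Definition gM : nat := gcdn n s.-1.
Definition gN : nat := gcdn n s.+1.

Lemma gMz : gM%:Z = gcdz n%:Z (s%:Z - 1).
Proof. by rewrite -predn_int ?s_gt0. Qed.

Lemma gNz : gN%:Z = gcdz n%:Z (s%:Z + 1).
Proof. by rewrite /gN /gcdz /= addn1. Qed.

Lemma succ_pred_s : s.+1 = (s.-1 + 2)%N.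
Proof. by rewrite addn2 prednK ?s_gt0. Qed.

Lemma gcd_gM_gN_dvd2 : (gcdn gM gN %| 2)%N.
Proof. by rewrite /gN succ_pred_s gcd_gcd_pair_dvd2. Qed.

Lemma gM_gN : (gM * gN)%N = n.
Proof.
have sqr : ((s.-1 * (s.-1 + 2))%N : int) = s%:Z * s%:Z - 1.
  by rewrite -succ_pred_s PoszM predn_int ?s_gt0 //; ring.
rewrite /gN succ_pred_s; apply: gcd_pair_product; first exact: ltn_trans n_gt2.
  by move: n_dvd_sqr; rewrite -sqr.
by move=> /not_rect; rewrite -sqr -mul2n; apply.
Qed.

Lemma n_neq0 : n%:Z != 0.
Proof. by rewrite eqz_nat -lt0n ltnW // ltnW. Qed.

(* (j, -j) lies in L iff n | j (s + 1) iff gM | j, because n = gM * gN. *)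
Lemma satin_antidiag (j : int) : D j (- j) = (gM%:Z %| j)%Z.
Proof.
rewrite /satin (_ : j - - j * s%:Z = j * (s%:Z + 1)); last by ring.
by apply: dvdz_mul_cofactor n_neq0 _; rewrite -gNz -PoszM gM_gN.
Qed.

(* (j, j) lies in L iff n | j (1 - s) iff gN | j. *)
Lemma satin_diag (j : int) : D j j = (gN%:Z %| j)%Z.
Proof.
rewrite /satin (_ : j - j * s%:Z = j * - (s%:Z - 1)); last by ring.
by apply: dvdz_mul_cofactor n_neq0 _; rewrite gcdzN -gMz -PoszM mulnC gM_gN.
Qed.

(* The differences x - y of points (x, y) of L are the multiples of gM,
   since x - y = (x - y s) + y (s - 1); likewise the sums x + y are the
   multiples of gN, since x + y = (x - y s) + y (s + 1). *)
Lemma satin_differences (k : int) :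
  (exists x y, D x y /\ k = x - y) <-> (gM%:Z %| k)%Z.
Proof.
rewrite gMz dvdz_gcd_comb; split=> [[x [y [/dvdzP [q xy] ->]]] | [q [y ->]]].
  by exists q, y; rewrite -xy; ring.
exists (q * n%:Z + y * s%:Z), y; split; last by ring.
by rewrite /satin addrK dvdz_mull.
Qed.

Lemma satin_sums (k : int) :
  (exists x y, D x y /\ k = x + y) <-> (gN%:Z %| k)%Z.
Proof.
rewrite gNz dvdz_gcd_comb; split=> [[x [y [/dvdzP [q xy] ->]]] | [q [y ->]]].
  by exists q, y; rewrite -xy; ring.
exists (q * n%:Z + y * s%:Z), y; split; last by ring.
by rewrite /satin addrK dvdz_mull.
Qed.

Lemma mirror_axis_M_satin (k : int) : mirror_axis_M D k <-> (2 * gM%:Z %| k)%Z.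
Proof.
split=> [[[[] [] [] t1 t2]] [/in_G1_satin [/= t_in _] // _] | /dvdzP [q ->]].
  rewrite /glideM /axisM /= => t12 <-.
  move: t_in; rewrite (_ : t2 = - t1) ?satin_antidiag; last by lia.
  by rewrite (_ : t1 - - t1 = 2 * t1) ?dvdz_mul2l //; ring.
exists (GIsom true false false (q * gM%:Z) (- (q * gM%:Z))).
split=> //; rewrite /glideM /axisM /= ?subrr //; last by ring.
by apply/in_G1_satin; rewrite /= satin_antidiag dvdz_mull.
Qed.

Lemma mirror_axis_N_satin (k : int) : mirror_axis_N D k <-> (2 * gN%:Z %| k)%Z.
Proof.
split=> [[[[] [] [] t1 t2]] [/in_G1_satin [/= t_in _] // _] | /dvdzP [q ->]].
  rewrite /glideN /axisN /= => t12 <-.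
  move: t_in; rewrite (_ : t2 = t1) ?satin_diag; last by lia.
  by rewrite (_ : t1 + t1 = 2 * t1) ?dvdz_mul2l //; ring.
exists (GIsom true true true (q * gN%:Z) (q * gN%:Z)).
split=> //; rewrite /glideN /axisN /= ?subrr //; last by ring.
by apply/in_G1_satin; rewrite /= satin_diag dvdz_mull.
Qed.

(* A point (x, y) of L with
   x - y = k yields the symmetry P |-> (P2 + 2x, P1 + 2y) with axis k; its
   glide x + y is made nonzero, if need be, by using (x + n, y + n) instead. *)
Lemma glide_axis_M_satin (k : int) : glide_axis_M D k <-> odd_multiple gM%:Z k.
Proof.
split=> [[g [[/in_G1_satin [t_in _] _ _ not_mirror] <-]] | /andP [kM not_mirror]].
  apply/andP; split; first by apply/satin_differences; exists (gt1 g), (gt2 g).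
  by apply/negP => /mirror_axis_M_satin.
have [x [y [xy kE glide]]] : exists x y, [/\ D x y, k = x - y & x + y != 0].
  have [x [y [xy ->]]] := proj2 (satin_differences k) kM.
  have [xy0 | ] := eqVneq (x + y) 0; last by exists x, y.
  have nn : D n%:Z n%:Z by rewrite satin_diag; apply: dvdn_gcdl.
  exists (x + n%:Z), (y + n%:Z); rewrite satin_add //; split=> //; first by ring.
  by move: n_gt2; lia.
exists (GIsom true false false x y); split=> //; split=> //; first exact/in_G1_satin.
by rewrite /axisM /= -kE => /mirror_axis_M_satin; apply/negP.
Qed.

Lemma glide_axis_N_satin (k : int) : glide_axis_N D k <-> odd_multiple gN%:Z k.
Proof.
split=> [[g [[/in_G1_satin [t_in _] _ _ not_mirror] <-]] | /andP [kN not_mirror]].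
  apply/andP; split; first by apply/satin_sums; exists (gt1 g), (gt2 g).
  by apply/negP => /mirror_axis_N_satin.
have [x [y [xy kE glide]]] : exists x y, [/\ D x y, k = x + y & x - y != 0].
  have [x [y [xy ->]]] := proj2 (satin_sums k) kN.
  have [xy0 | ] := eqVneq (x - y) 0; last by exists x, y.
  have nmn : D n%:Z (- n%:Z) by rewrite satin_antidiag; apply: dvdn_gcdl.
  exists (x + n%:Z), (y - n%:Z); rewrite satin_add //; split=> //; first by ring.
  by move: n_gt2; lia.
exists (GIsom true true true x y); split=> //; split=> //; first exact/in_G1_satin.
by rewrite /axisN /= -kE => /mirror_axis_N_satin; apply/negP.
Qed.

(* The supplementary half-turn centres are the points P of L (all half-turns
   P |-> 2P - Q with P in L are symmetries) with P1 - P2 an odd multiple of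
   gM and P1 + P2 an odd multiple of gN. *)
Lemma supp_centre_satin (P : int * int) : supp_centre D P <->
  [/\ lat P, odd_multiple gM%:Z (P.1 - P.2) & odd_multiple gN%:Z (P.1 + P.2)].
Proof.
split=> [[[g [/in_G1_satin [t_in _] ht <-]]] | [P_in PM PN]].
  by move=> /glide_axis_M_satin PM /glide_axis_N_satin PN.
split; [| exact: (glide_axis_M_satin _).2 | exact: (glide_axis_N_satin _).2].
exists (GIsom false true true P.1 P.2); split=> //; last by case: P {P_in PM PN}.
exact/in_G1_satin.
Qed.

Lemma gM_gt0 : (0 < gM)%N.
Proof. by rewrite gcdn_gt0 (ltn_trans _ n_gt2). Qed.

Lemma gN_gt0 : (0 < gN)%N.
Proof. by rewrite gcdn_gt0 (ltn_trans _ n_gt2). Qed.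

(* Odd n: gM and gN are odd, coprime, and n = gM * gN is an odd multiple of
   both, so (n, 0) is a supplementary centre; every supplementary centre P
   has P1 + P2 an odd multiple of gN, hence odd: exactly one coordinate of
   2P is odd, i.e. P lies on a cell edge but not at a corner.  The central
   rectangle measures 2 gM by 2 gN in units of beta / 2. *)
Lemma species28o_satin : odd n -> species28o D.
Proof.
move=> n_odd; rewrite -gM_gN oddM in n_odd; case/andP: n_odd => gM_odd gN_odd.
have gM0 : gM%:Z != 0 by rewrite eqz_nat -lt0n gM_gt0.
have gN0 : gN%:Z != 0 by rewrite eqz_nat -lt0n gN_gt0.
have oddZ (m : nat) : odd m -> ~~ (2 %| m%:Z)%Z by rewrite dvdzE /= dvdn2 negbK.
split.
- exact: species28_satin.
- exists (n%:Z, 0); apply/supp_centre_satin; rewrite /= ?subr0 ?addr0 satin_n_0.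
  by split=> //; apply/odd_multipleP => //; [exists gN%:Z | exists gM%:Z];
    rewrite ?oddZ // -PoszM -gM_gN // mulnC.
- move=> P /supp_centre_satin [_ _ /(odd_multipleP _ gN0) [m PE m_odd]].
  have : ~~ (2 %| P.1 + P.2)%Z by rewrite PE dvd2zM negb_or m_odd oddZ.
  by rewrite /on_cell_edge /cell_corner; lia.
- exists gM, gN; split=> //.
    have := gcd_gM_gN_dvd2; have : odd (gcdn gM gN).
      apply: contraTT gM_odd; rewrite -!dvdn2 => /dvdn_trans; apply.
      exact: dvdn_gcdl.
    by rewrite /coprime; case: (gcdn gM gN) => [|[|[|]]].
  left; split; apply: spacing_odd_multiple;
    by [rewrite ltz_nat gM_gt0 | apply: glide_axis_M_satin
       | rewrite ltz_nat gN_gt0 | apply: glide_axis_N_satin].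
Qed.

(* Even n: writing s - 1 = r1 gM and s + 1 = r2 gN gives
   s^2 - 1 = r1 r2 gM gN = r1 r2 n, so r1 and r2 are odd since 2n does not
   divide s^2 - 1.  In particular s - 1 and s + 1 are odd multiples of gM
   and gN. *)
Lemma even_cofactors_odd : ~~ odd n -> exists r1 r2,
  [/\ s%:Z - 1 = r1 * gM%:Z, s%:Z + 1 = r2 * gN%:Z & ~~ (2 %| r1)%Z && ~~ (2 %| r2)%Z].
Proof.
move=> n_even.
have /dvdzP [r1 r1E] : (gM%:Z %| s%:Z - 1)%Z by rewrite gMz dvdz_gcdr.
have /dvdzP [r2 r2E] : (gN%:Z %| s%:Z + 1)%Z by rewrite gNz dvdz_gcdr.
exists r1, r2; split=> //; rewrite -negb_or -dvd2zM.
apply: contra (not_rect n_even) => /dvdzP [q qE]; apply/dvdzP; exists q.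
rewrite -gM_gN PoszM; transitivity ((s%:Z - 1) * (s%:Z + 1)); first by ring.
rewrite r1E r2E; transitivity ((r1 * r2) * (gM%:Z * gN%:Z)); first by ring.
by rewrite qE; ring.
Qed.

(* Even n: s is odd, so gM = 2a and gN = 2b are even, and subtracting
   s - 1 = 2a r1 from s + 1 = 2b r2 gives b r2 - a r1 = 1 with r1, r2 odd;
   hence a and b are coprime and of opposite parity. *)
Lemma even_half_gcds : ~~ odd n -> exists a b : nat,
  [/\ gM = (a * 2)%N, gN = (b * 2)%N, coprime a b & ~~ (2 %| a%:Z + b%:Z)%Z].
Proof.
move=> n_even.
have s_odd : odd s by rewrite -coprime2n (coprime_dvdl _ n_coprime_s) // dvdn2.
have [a gMa] : exists a, gM = (a * 2)%N.
  by apply/dvdnP; rewrite dvdn_gcd !dvdn2 n_even /=; move: s_gt0 s_odd; lia.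
have [b gNb] : exists b, gN = (b * 2)%N.
  by apply/dvdnP; rewrite dvdn_gcd !dvdn2 n_even /= s_odd.
have [r1 [r2 [r1E r2E r12_odd]]] := even_cofactors_odd n_even.
rewrite gMa gNb !PoszM in r1E r2E.
have bezout : b%:Z * r2 - a%:Z * r1 = 1 by move: r1E r2E; lia.
exists a, b; split=> //.
  have : (gcdz a b %| 1)%Z by apply/dvdz_gcd_comb; exists (- r1), r2; move: bezout; lia.
  by rewrite dvdz1.
have : (2 %| b%:Z * (r2 - 1) - a%:Z * (r1 - 1))%Z.
  by rewrite rpredB // dvdz_mull //; move: r12_odd; lia.
by move: bezout; lia.
Qed.

(* Even n: (s, 1) is a supplementary centre, and any supplementary centre
   P = (m1 a + m2 b, m2 b - m1 a), with m1, m2 odd and a + b odd, has both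
   coordinates odd: it is a cell corner.  The central rectangle measures
   4a by 4b in units of beta / 2. *)
Lemma species28e_satin : ~~ odd n -> species28e D.
Proof.
move=> n_even; have [a [b [gMa gNb ab_coprime ab_parity]]] := even_half_gcds n_even.
have gM0 : gM%:Z != 0 by rewrite eqz_nat -lt0n gM_gt0.
have gN0 : gN%:Z != 0 by rewrite eqz_nat -lt0n gN_gt0.
split.
- exact: species28_satin.
- have [r1 [r2 [r1E r2E /andP [r1_odd r2_odd]]]] := even_cofactors_odd n_even.
  exists (s%:Z, 1); apply/supp_centre_satin; rewrite /= satin_s_1.
  by split=> //; apply/odd_multipleP => //; [exists r1 | exists r2].
- move=> P /supp_centre_satin [_ /(odd_multipleP _ gM0) [m1 P1E m1_odd]
    /(odd_multipleP _ gN0) [m2 P2E m2_odd]].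
  rewrite gMa gNb !PoszM in P1E P2E.
  have : (2 %| (m1 - 1) * a%:Z)%Z && (2 %| (m2 - 1) * b%:Z)%Z.
    by rewrite !dvdz_mulr //; move: m1_odd m2_odd; lia.
  by rewrite /cell_corner; move: ab_parity P1E P2E; lia.
have rectM : spacing (glide_axis_M D) (4 * a%:Z).
  rewrite (_ : 4 * a%:Z = 2 * gM%:Z); last by rewrite gMa PoszM; ring.
  by apply: spacing_odd_multiple glide_axis_M_satin; rewrite ltz_nat gM_gt0.
have rectN : spacing (glide_axis_N D) (4 * b%:Z).
  rewrite (_ : 4 * b%:Z = 2 * gN%:Z); last by rewrite gNb PoszM; ring.
  by apply: spacing_odd_multiple glide_axis_N_satin; rewrite ltz_nat gN_gt0.
have [a_odd | a_even] := boolP (odd a).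
  by exists a, b; split=> //; [move: ab_parity a_odd; lia | left].
exists b, a; split=> //; last by right.
  by move: ab_parity a_even; lia.
by rewrite coprime_sym.
Qed.

End SatinLattice.

Lemma not_square_gt2 (n s : nat) :
  (0 < n)%N -> coprime n s -> ~~ square_satin n s -> (2 < n)%N.
Proof.
case: n => [|[|[|n]]] //; rewrite /square_satin ?dvd1n //.
by rewrite coprime2n dvdn2 /= oddX /= negbK => _ ->.
Qed.

Lemma rhombic_satin_arith (n s : nat) : (0 < n)%N -> coprime n s ->
  rhombic_satin n s ->
  [/\ (2 < n)%N, (n%:Z %| s%:Z * s%:Z - 1)%Z
    & ~~ odd n -> ~~ (2 * n%:Z %| s%:Z * s%:Z - 1)%Z].
Proof.
move=> n0 cop /and3P [iso nsq nrect].
have modE (d : nat) : (s ^ 2 == 1 %[mod d])%N = (d%:Z %| s%:Z * s%:Z - 1)%Z.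
  by rewrite -eqz_mod_dvd -PoszM !modz_nat eqz_nat mulnn.
have sq1 : (s ^ 2 == 1 %[mod n])%N.
  by case/orP: iso => // sq; rewrite /square_satin sq in nsq.
split; [exact: not_square_gt2 nsq | by rewrite -modE |].
move=> n_even; rewrite -PoszM -modE.
by move: nrect; rewrite /rectangular_satin iso nsq n_even.
Qed.

Theorem theorem2 (n s : nat) :
  (0 < n)%N -> coprime n s -> rhombic_satin n s ->
  (odd n -> species28o (satin n s)) /\ (~~ odd n -> species28e (satin n s)).
Proof.
move=> n0 cop rh; have [n_gt2 n_dvd not_rect] := rhombic_satin_arith n0 cop rh.
by split; [exact: species28o_satin | exact: species28e_satin].
Qed.
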